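(* Let $n>5f$. The convergence algorithm described in the context, executed by $n$ robots of which at most $f$ are Byzantine, in the CORDA model under a fully asynchronous scheduler, is cautious.
   Context: Setting: $n$ robots on the real line, of which at most $f$ are Byzantine (arbitrary behaviour, positions chosen by an adversary). Robots are anonymous, oblivious, have no common orientation, and have unlimited visibility with strong multiplicity detection. Each correct robot runs Look–Compute–Move cycles. In a Move, the adversary may stop robot $i$ only after it has moved at least $\delta_i>0$ toward its destination (or reached it). In the CORDA model, phases of different robots interleave arbitrarily, so computations may use outdated snapshots. A fully asynchronous scheduler only guarantees that every robot is activated infinitely often. Algorithm: with snapshot sorted $P_1\le\dots\le P_n$ and own position $x_i$, robot $i$ is elected iff $x_i\le P_{f+1}$ or $x_i\ge P_{n-f}$. If elected, it moves toward the midpoint of $\min(x_i,P_{2f+1})$ and $\max(x_i,P_{n-2f})$. This midpoint is the center of $trim^i_{2f}(P)$, the multiset obtained by removing, among the $2f$ smallest positions, those smaller than $x_i$, and, among the $2f$ largest positions, those larger than $x_i$. Cautious: let $D_i(t)$ be the last destination computed by robot $i$ at or before $t$, and $U^i(t)$ the positions of correct robots in $i$'s last observation. The algorithm is cautious if both of the following hold: - $D_i(t)\in[\min U^i(t),\max U^i(t)]$ for every correct $i$ and every $t$; - whenever the correct robots are not all at one point at time $t$, some correct robot $i$ at some time $t'>t$ has $D_i(t')$ different from its position. *)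

From HB Require Import structures.
From mathcomp Require Import all_boot all_order all_algebra.
From mathcomp Require Import all_classical all_reals all_analysis.
Import Order.TTheory GRing.Theory Num.Theory.
Import numFieldNormedType.Exports.
Local Open Scope classical_set_scope.
Local Open Scope ring_scope.

(* A snapshot P is the sorted (nondecreasing) list of the n observed   *)
(* positions, with multiplicities (strong multiplicity detection).     *)
(* [Pk P k] is P_k with the paper's 1-based indexing.                  *)
Definition Pk {R : realType} (P : seq R) (k : nat) : R := nth 0 P k.-1.

Definition elected {R : realType} (n f : nat) (P : seq R) (x : R) : bool :=
  (x <= Pk P f.+1) || (Pk P (n - f) <= x).

Definition destination {R : realType} (n f : nat) (P : seq R) (x : R) : R :=
  if elected n f P x
  then (Num.min x (Pk P (2 * f).+1) + Num.max x (Pk P (n - 2 * f))) / 2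
  else x.

Definition snapshot {R : realType} (n : nat) (pos : 'I_n -> R -> R) (t : R)
  : seq R := sort <=%R [seq pos j t | j <- enum 'I_n].

Definition dest_of {R : realType} (n f : nat) (pos : 'I_n -> R -> R)
  (L : 'I_n -> nat -> R) (i : 'I_n) (k : nat) : R :=
  destination n f (snapshot n pos (L i k)) (pos i (L i k)).

(* Robot i's k-th cycle: Look at L i k, Compute at C i k, Move during  *)
(* [M i k, E i k].  Byzantine robots (the set byz) move arbitrarily.   *)
Definition corda_execution {R : realType} (n f : nat) (byz : {set 'I_n})
  (delta : 'I_n -> R) (pos : 'I_n -> R -> R)
  (L C M E : 'I_n -> nat -> R) : Prop :=
  forall i, i \notin byz ->
  [/\
      (forall k, [/\ L i k <= C i k, C i k <= M i k, M i k <= E i k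
                   & E i k <= L i k.+1]),
      (forall T : R, exists k, T < L i k),
      (forall t, t <= M i 0 -> pos i t = pos i (M i 0)),
      (forall k t, E i k <= t <= M i k.+1 -> pos i t = pos i (E i k))
    & (* Move phase of cycle k: continuous monotone motion along the segment
         towards the computed destination, stopped by the adversary only
         after reaching it or after having moved at least delta i *)
      (forall k, exists lam : R -> R,
        let s := pos i (M i k) in
        let d := dest_of n f pos L i k in
        [/\ {within `[M i k, E i k], continuous lam},
            lam (M i k) = 0,
            (forall u v, M i k <= u -> u <= v -> v <= E i k -> lam u <= lam v),
            (forall t, M i k <= t <= E i k ->
               0 <= lam t <= 1 /\ pos i t = s + lam t * (d - s))
          & (lam (E i k) = 1 \/ delta i <= `|pos i (E i k) - s|)])].

(* k is the index of the last Compute of robot i at or before t;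
   D_i(t) is then dest_of .. i k and U^i(t) the correct positions in the
   snapshot of Look k. *)
Definition last_compute {R : realType} (n : nat) (C : 'I_n -> nat -> R)
  (i : 'I_n) (t : R) (k : nat) : Prop :=
  C i k <= t /\ (forall k', C i k' <= t -> (k' <= k)%N).

Definition gathered {R : realType} (n : nat) (byz : {set 'I_n})
  (pos : 'I_n -> R -> R) (t : R) : Prop :=
  forall i j, i \notin byz -> j \notin byz -> pos i t = pos j t.

Definition cautious {R : realType} (n f : nat) (byz : {set 'I_n})
  (pos : 'I_n -> R -> R) (L C : 'I_n -> nat -> R) : Prop :=
  (forall i t k, i \notin byz -> last_compute n C i t k ->
     (exists2 j, j \notin byz & pos j (L i k) <= dest_of n f pos L i k) /\
     (exists2 j, j \notin byz & dest_of n f pos L i k <= pos j (L i k)))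
  /\
  (forall t, ~ gathered n byz pos t ->
     exists i t' k, [/\ i \notin byz, t < t', last_compute n C i t' k
                      & dest_of n f pos L i k != pos i t']).

From HB Require Import structures.
From mathcomp Require Import all_boot all_order all_algebra.
From mathcomp Require Import all_classical all_reals all_analysis.
From mathcomp Require Import lra zify.
Import Order.TTheory GRing.Theory Num.Theory.
Import numFieldNormedType.Exports.
Local Open Scope ring_scope.

(* Safety: with at most f Byzantine robots and n > 3f, P_{2f+1} is at least
   and P_{n-2f} at most some correct position, so the destination, a midpoint
   of two points between the extreme correct positions, stays between them.
   Progress: suppose that after time t every correct robot always has its
   last computed destination at its current position. Then, on the part of
   each Move after t, the robot stands at the destination of that Move; by
   continuity and monotonicity of the motion it stands there from the start
   of that part on, so all correct robots are frozen after t. The lowest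
   correct robot, at a, looks again, is elected, and computes destination a
   only if P_{n-2f} <= a, i.e. n - 2f robots lie at or below a; symmetrically
   n - 2f robots lie at or above the highest correct position b. If a < b
   only Byzantine robots lie in both groups, so 2(n - 2f) <= n + f,
   contradicting n > 5f. *)

Set Implicit Arguments.
Unset Strict Implicit.

Section SortedCount.
Variables (d : Order.disp_t) (T : porderType d) (x0 : T).
Implicit Types (s : seq T) (p : pred T).

Lemma sorted_count_lower s p k :
  sorted <=%O s -> (k < size s)%N ->
  (forall x y, (x <= y)%O -> p y -> p x) ->
  p (nth x0 s k) -> (k.+1 <= count p s)%N.
Proof.
move=> s_sorted lt_k_s p_down pk.
have all_take : all p (take k.+1 s).
  apply/(all_nthP x0) => j; rewrite (size_takel lt_k_s) ltnS => le_jk.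
  rewrite nth_take // (p_down _ _ _ pk) //.
  by apply: (sorted_leq_nth le_trans lexx) => //; rewrite inE (leq_ltn_trans le_jk).
rewrite -(cat_take_drop k.+1 s) count_cat.
by move: all_take; rewrite all_count => /eqP ->; rewrite (size_takel lt_k_s) leq_addr.
Qed.

Lemma sorted_count_upper s p k :
  sorted <=%O s -> (k < size s)%N ->
  (forall x y, (x <= y)%O -> p x -> p y) ->
  p (nth x0 s k) -> (size s - k <= count p s)%N.
Proof.
move=> s_sorted lt_k_s p_up pk.
have all_drop : all p (drop k s).
  apply/(all_nthP x0) => j; rewrite size_drop => lt_j.
  rewrite nth_drop (p_up _ _ _ pk) //.
  apply: (sorted_leq_nth le_trans lexx) => //; last exact: leq_addr.
  by rewrite inE -ltn_subRL.
rewrite -(cat_take_drop k s) count_cat.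
by move: all_drop; rewrite all_count => /eqP ->; rewrite size_drop cat_take_drop leq_addl.
Qed.

End SortedCount.

Section Snapshot.
Variables (R : realType) (n : nat) (pos : 'I_n -> R -> R) (T : R).

Lemma snapshot_sorted : sorted <=%R (snapshot n pos T).
Proof. exact: (sort_sorted le_total). Qed.

Lemma size_snapshot : size (snapshot n pos T) = n.
Proof. by rewrite size_sort size_map size_enum_ord. Qed.

Lemma count_snapshot (p : pred R) :
  count p (snapshot n pos T) = #|[set j | p (pos j T)]|.
Proof.
have /permPl/permP -> := perm_sort <=%R [seq pos j T | j <- enum 'I_n].
rewrite count_map cardE /enum_mem size_filter.
by rewrite count_filter; apply: eq_count => j; rewrite !inE andbT.
Qed.

Lemma card_le_nth_snapshot k a : (k < n)%N ->
  nth 0 (snapshot n pos T) k <= a -> (k.+1 <= #|[set j | (pos j T <= a)%R]|)%N.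
Proof.
move=> lt_kn le_a; rewrite -(count_snapshot (fun x => x <= a)).
apply: sorted_count_lower le_a; rewrite ?size_snapshot //; first exact: snapshot_sorted.
by move=> x y; apply: le_trans.
Qed.

Lemma card_lt_nth_snapshot k a : (k < n)%N ->
  nth 0 (snapshot n pos T) k < a -> (k.+1 <= #|[set j | (pos j T < a)%R]|)%N.
Proof.
move=> lt_kn lt_a; rewrite -(count_snapshot (fun x => x < a)).
apply: sorted_count_lower lt_a; rewrite ?size_snapshot //; first exact: snapshot_sorted.
by move=> x y; apply: le_lt_trans.
Qed.

Lemma card_ge_nth_snapshot k a : (k < n)%N ->
  a <= nth 0 (snapshot n pos T) k -> (n - k <= #|[set j | (a <= pos j T)%R]|)%N.
Proof.
move=> lt_kn ge_a; rewrite -(count_snapshot (fun x => a <= x)) -{1}size_snapshot.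
apply: sorted_count_upper ge_a; rewrite ?size_snapshot //; first exact: snapshot_sorted.
by move=> x y le_xy a_x; apply: le_trans a_x le_xy.
Qed.

Lemma card_gt_nth_snapshot k a : (k < n)%N ->
  a < nth 0 (snapshot n pos T) k -> (n - k <= #|[set j | (a < pos j T)%R]|)%N.
Proof.
move=> lt_kn gt_a; rewrite -(count_snapshot (fun x => a < x)) -{1}size_snapshot.
apply: sorted_count_upper gt_a; rewrite ?size_snapshot //; first exact: snapshot_sorted.
by move=> x y le_xy a_x; apply: lt_le_trans a_x le_xy.
Qed.

End Snapshot.

Section Destination.
Variables (R : realType) (n f : nat) (P : seq R).

Lemma destination_ge x lo :
  lo <= x -> lo <= Pk P (2 * f).+1 -> lo <= destination n f P x.
Proof.
move=> lo_x lo_P; rewrite /destination; case: ifP => // _.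
have : lo <= Num.min x (Pk P (2 * f).+1) by rewrite le_min lo_x lo_P.
have : lo <= Num.max x (Pk P (n - 2 * f)) by rewrite le_max lo_x.
lra.
Qed.

Lemma destination_le x hi :
  x <= hi -> Pk P (n - 2 * f) <= hi -> destination n f P x <= hi.
Proof.
move=> x_hi P_hi; rewrite /destination; case: ifP => // _.
have : Num.min x (Pk P (2 * f).+1) <= hi by rewrite ge_min x_hi.
have : Num.max x (Pk P (n - 2 * f)) <= hi by rewrite ge_max x_hi P_hi.
lra.
Qed.

Lemma destination_fixed_lower a :
  a <= Pk P f.+1 -> a <= Pk P (2 * f).+1 -> destination n f P a = a ->
  Pk P (n - 2 * f) <= a.
Proof.
rewrite /destination /elected => -> le_a /=; rewrite (min_l le_a).
have : Pk P (n - 2 * f) <= Num.max a (Pk P (n - 2 * f)) by rewrite le_max lexx orbT.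
lra.
Qed.

Lemma destination_fixed_upper b :
  Pk P (n - f) <= b -> Pk P (n - 2 * f) <= b -> destination n f P b = b ->
  b <= Pk P (2 * f).+1.
Proof.
rewrite /destination /elected => -> le_b; rewrite orbT (max_l le_b).
have : Num.min b (Pk P (2 * f).+1) <= Pk P (2 * f).+1 by rewrite ge_min lexx orbT.
lra.
Qed.

End Destination.

Section ByzantineMinority.
Variables (R : realType) (n f : nat) (byz : {set 'I_n}) (pos : 'I_n -> R -> R).
Hypothesis byz_le_f : (#|byz| <= f)%N.

Lemma card_byz_only (q : pred 'I_n) :
  (forall j, j \notin byz -> ~~ q j) -> (#|[set j | q j]| <= f)%N.
Proof.
move=> q_byz; apply: leq_trans byz_le_f; apply: subset_leq_card.
by apply/fintype.subsetP => j; rewrite inE; apply: contraLR => /q_byz.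
Qed.

Lemma correct_lb_nth_snapshot T a k : (f <= k < n)%N ->
  (forall j, j \notin byz -> a <= pos j T) -> a <= nth 0 (snapshot n pos T) k.
Proof.
move=> /andP[le_fk lt_kn] a_lb; rewrite leNgt; apply/negP.
have card_below : (#|[set j | (pos j T < a)%R]| <= f)%N.
  by apply: card_byz_only => j /a_lb; rewrite -leNgt.
move/(card_lt_nth_snapshot lt_kn)/leq_trans/(_ card_below).
by rewrite ltnNge le_fk.
Qed.

Lemma correct_ub_nth_snapshot T b k : (k < n - f)%N ->
  (forall j, j \notin byz -> pos j T <= b) -> nth 0 (snapshot n pos T) k <= b.
Proof.
move=> lt_k b_ub; rewrite leNgt; apply/negP.
have card_above : (#|[set j | (b < pos j T)%R]| <= f)%N.
  by apply: card_byz_only => j /b_ub; rewrite -leNgt.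
move/(card_gt_nth_snapshot (leq_trans lt_k (leq_subr _ _)))/leq_trans/(_ card_above).
lia.
Qed.

Lemma destination_between_correct T i : (3 * f < n)%N -> i \notin byz ->
  (exists2 j, j \notin byz & pos j T <= destination n f (snapshot n pos T) (pos i T)) /\
  (exists2 j, j \notin byz & destination n f (snapshot n pos T) (pos i T) <= pos j T).
Proof.
move=> lt_3f_n i_ok; split.
- have [j j_ok j_min] :=
    @arg_minP _ _ _ i (fun j => j \notin byz) (fun j => pos j T) i_ok.
  exists j => //; apply: destination_ge; first exact: j_min.
  by apply: correct_lb_nth_snapshot j_min; lia.
- have [j j_ok j_max] :=
    @arg_maxP _ _ _ i (fun j => j \notin byz) (fun j => pos j T) i_ok.
  exists j => //; apply: destination_le; first exact: j_max.
  by apply: correct_ub_nth_snapshot j_max; lia.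
Qed.

Lemma fixed_extremes_absurd TA TB a b : (5 * f < n)%N -> a < b ->
  (forall j, j \notin byz -> pos j TA = pos j TB) ->
  (forall j, j \notin byz -> a <= pos j TA) ->
  (forall j, j \notin byz -> pos j TB <= b) ->
  destination n f (snapshot n pos TA) a = a ->
  destination n f (snapshot n pos TB) b = b -> False.
Proof.
move=> lt_5f_n lt_ab same_pos a_lb b_ub fixed_a fixed_b.
have low_a : Pk (snapshot n pos TA) (n - 2 * f) <= a.
  by apply: destination_fixed_lower fixed_a; apply: correct_lb_nth_snapshot a_lb; lia.
have high_b : b <= Pk (snapshot n pos TB) (2 * f).+1.
  by apply: destination_fixed_upper fixed_b; apply: correct_ub_nth_snapshot b_ub; lia.
set A := [set j | (pos j TA <= a)%R]; set B := [set j | (b <= pos j TB)%R].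
have card_A : (n - 2 * f <= #|A|)%N.
  have lt_n : ((n - 2 * f).-1 < n)%N by lia.
  by have := card_le_nth_snapshot lt_n low_a; rewrite -/A; lia.
have card_B : (n - 2 * f <= #|B|)%N.
  have lt_n : (2 * f < n)%N by lia.
  by have := card_ge_nth_snapshot lt_n high_b; rewrite -/B.
have card_AB : (#|A :&: B| <= f)%N.
  have -> : A :&: B = [set j | (pos j TA <= a) && (b <= pos j TB)].
    by apply/setP => j; rewrite !inE.
  apply: card_byz_only => j j_ok; apply/negP => /andP[].
  by rewrite -same_pos //; have := a_lb j j_ok; lra.
have := cardsUI A B; have := max_card (A :|: B); rewrite card_ord; lia.
Qed.

Lemma frozen_robots_gathered t : (5 * f < n)%N ->
  (forall i, i \notin byz -> forall u, t <= u -> pos i u = pos i t) ->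
  (forall i, i \notin byz -> exists2 T, t <= T &
     destination n f (snapshot n pos T) (pos i t) = pos i t) ->
  gathered n byz pos t.
Proof.
move=> lt_5f_n frozen fixed i j i_ok j_ok.
have [lo lo_ok lo_min] := @arg_minP _ _ _ i (fun j => j \notin byz) (fun j => pos j t) i_ok.
have [hi hi_ok hi_max] := @arg_maxP _ _ _ i (fun j => j \notin byz) (fun j => pos j t) i_ok.
suff : pos hi t <= pos lo t.
  move: (lo_min i i_ok) (lo_min j j_ok) (hi_max i i_ok) (hi_max j j_ok) => /=.
  lra.
rewrite leNgt; apply/negP => lt_lo_hi.
have [TA t_TA fixed_lo] := fixed lo lo_ok; have [TB t_TB fixed_hi] := fixed hi hi_ok.
apply: (fixed_extremes_absurd lt_5f_n lt_lo_hi _ _ _ fixed_lo fixed_hi) => k k_ok.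
- by rewrite !frozen.
- by rewrite frozen //; apply: lo_min.
- by rewrite frozen //; apply: hi_max.
Qed.

End ByzantineMinority.

Section SegmentMove.
Local Open Scope classical_set_scope.
Variable R : realType.

Lemma within_continuous_right_const (g : R -> R) (a b c y : R) :
  {within `[a, b], continuous g} -> a <= c -> c < b ->
  (forall v, c < v -> v < b -> g v = y) -> g c = y.
Proof.
move=> g_cont a_c c_b g_y; have a_b := le_lt_trans a_c c_b.
move/(continuous_within_itvP _ a_b): g_cont => [g_in g_a _].
have g_right : g x @[x --> c^'+] --> g c.
  have [<-//|a_neq_c] := eqVneq a c.
  by apply/cvg_at_right_filter/g_in; rewrite in_itv /= c_b andbT lt_neqAle a_neq_c.
have near_y : \forall v \near c^'+, (fun=> y) v = g v.
  by apply: filterS2 (nbhs_right_gt c) (nbhs_right_lt c_b) => v ? ?; rewrite g_y.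
have g_right_y : g x @[x --> c^'+] --> y.
  exact: cvg_trans (@near_eq_cvg _ _ _ (at_right_proper_filter c) _ _ near_y) (cvg_cst y).
exact: (@norm_cvg_unique _ _ (g x @[x --> c^'+]) _ _ _ g_right g_right_y).
Qed.

(* The Move clause of [corda_execution], for one robot and one cycle. *)
Definition segment_move (x : R -> R) (m e d delta : R) : Prop :=
  exists lam : R -> R,
  [/\ {within `[m, e], continuous lam}, lam m = 0,
      (forall u v, m <= u -> u <= v -> v <= e -> lam u <= lam v),
      (forall u, m <= u <= e -> 0 <= lam u <= 1 /\ x u = x m + lam u * (d - x m))
    & (lam e = 1 \/ delta <= `|x e - x m|)].

Lemma segment_move_lt x m e d delta :
  0 < delta -> m <= e -> segment_move x m e d delta -> m < e.
Proof.
move=> delta_gt0 m_e [lam [_ lam_m _ _ lam_e]].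
rewrite lt_neqAle m_e andbT; apply/eqP => m_eq_e.
by move: lam_e; rewrite -m_eq_e lam_m subrr normr0; lra.
Qed.

Lemma segment_move_settled x m e d delta c :
  segment_move x m e d delta -> m <= c -> c < e ->
  (forall v, c < v -> v < e -> x v = d) -> forall u, c <= u <= e -> x u = d.
Proof.
move=> [lam [lam_cont _ lam_mono lam_pos _]] m_c c_e x_d u /andP[c_u u_e].
have m_u := le_trans m_c c_u.
have [/andP[_ lam_u_le1] x_u] := lam_pos u (ltac:(by rewrite m_u u_e)).
have [d_eq|d_neq] := eqVneq d (x m); first by rewrite x_u d_eq subrr mulr0 addr0.
suff lam_u : lam u = 1 by rewrite x_u lam_u mul1r addrC subrK.
have lam_tail v : c < v -> v < e -> lam v = 1.
  move=> c_v v_e; have m_v := le_trans m_c (ltW c_v).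
  have [_] := lam_pos v (ltac:(by rewrite m_v (ltW v_e))); rewrite x_d // => x_v.
  have : (lam v - 1) * (d - x m) = 0 by rewrite mulrBl mul1r; lra.
  by move/eqP; rewrite mulf_eq0 !subr_eq0 (negPf d_neq) orbF => /eqP.
have lam_c := within_continuous_right_const lam_cont m_c c_e lam_tail.
by apply/eqP; rewrite eq_le lam_u_le1 -{1}lam_c lam_mono.
Qed.

End SegmentMove.

Section CycleTimes.
Variables (R : realType) (L C M E : nat -> R).
Hypothesis cycles_ordered :
  forall k, [/\ L k <= C k, C k <= M k, M k <= E k & E k <= L k.+1].
Hypothesis moves_nonempty : forall k, M k < E k.

Definition last_compute_at (t : R) (k : nat) : Prop :=
  C k <= t /\ forall k', C k' <= t -> (k' <= k)%N.

Lemma end_le_next_compute k : E k <= C k.+1.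
Proof.
have [_ _ _ E_L] := cycles_ordered k; have [L_C _ _ _] := cycles_ordered k.+1.
exact: le_trans E_L L_C.
Qed.

Lemma compute_increasing : {homo C : k k' / (k < k')%N >-> k < k'}.
Proof.
apply: homo_ltn => [? ? ?|k]; first exact: lt_trans.
have [_ C_M _ _] := cycles_ordered k.
exact: le_lt_trans C_M (lt_le_trans (moves_nonempty k) (end_le_next_compute k)).
Qed.

Lemma end_le_compute k k' : (k < k')%N -> E k <= C k'.
Proof.
rewrite leq_eqVlt => /orP[/eqP <-|/compute_increasing/ltW]; first exact: end_le_next_compute.
exact: le_trans (end_le_next_compute k).
Qed.

Lemma last_compute_at_compute k : last_compute_at (C k) k.
Proof.
split=> // k' C_k'; rewrite leqNgt; apply/negP => /compute_increasing.
by rewrite ltNge C_k'.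
Qed.

Lemma last_compute_at_move k v : M k <= v -> v < E k -> last_compute_at v k.
Proof.
move=> M_v v_E; have [_ C_M _ _] := cycles_ordered k; split; first exact: le_trans C_M M_v.
move=> k' C_k'; rewrite leqNgt; apply/negP => /end_le_compute E_C.
by have := le_lt_trans (le_trans E_C C_k') v_E; rewrite ltxx.
Qed.

End CycleTimes.

Section FrozenRobot.
Variables (R : realType) (L C M E : nat -> R) (x : R -> R) (d : nat -> R) (delta t : R).
Hypothesis cycles_ordered :
  forall k, [/\ L k <= C k, C k <= M k, M k <= E k & E k <= L k.+1].
Hypothesis activated : forall T, exists k, T < L k.
Hypothesis still_before : forall u, u <= M 0 -> x u = x (M 0).
Hypothesis still_between : forall k u, E k <= u <= M k.+1 -> x u = x (E k).
Hypothesis delta_gt0 : 0 < delta.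
Hypothesis moves : forall k, segment_move x (M k) (E k) (d k) delta.
Hypothesis at_destination :
  forall t' k, t < t' -> last_compute_at C t' k -> d k = x t'.

Let moves_nonempty k : M k < E k.
Proof. by have [_ _ M_E _] := cycles_ordered k; apply: segment_move_lt (moves k). Qed.

Let settled k u : t < E k -> Num.max t (M k) <= u <= E k -> x u = d k.
Proof.
move=> t_E; apply: (segment_move_settled (moves k)).
- by rewrite le_max lexx orbT.
- by rewrite gt_max t_E moves_nonempty.
- move=> v; rewrite gt_max => /andP[t_v M_v] v_E.
  have last_v := last_compute_at_move cycles_ordered moves_nonempty (ltW M_v) v_E.
  by rewrite (at_destination t_v last_v).
Qed.

Lemma frozen_after u : t <= u -> x u = x t.
Proof.
suff frozen_upto k v : t <= v <= M k -> x v = x t.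
  move=> t_u; have [k u_L] := activated u; have [L_C C_M _ _] := cycles_ordered k.
  by apply: (frozen_upto k); rewrite t_u (le_trans (ltW u_L) (le_trans L_C C_M)).
elim: k v => [|k IH] v /andP[t_v v_M].
  by rewrite still_before // (still_before (le_trans t_v v_M)).
have frozen_move w : t <= w <= E k -> x w = x t.
  move=> /andP[t_w w_E]; have [w_M|M_w] := leP w (M k); first by apply: IH; rewrite t_w.
  have [<- //|t_neq_w] := eqVneq t w.
  have t_E : t < E k by apply: lt_le_trans w_E; rewrite lt_neqAle t_neq_w.
  have start_E : Num.max t (M k) <= E k by rewrite ge_max (ltW t_E) (ltW (moves_nonempty k)).
  rewrite (settled t_E) ?ge_max ?t_w ?(ltW M_w) //.
  rewrite -(settled t_E (u := Num.max t (M k))) ?lexx ?start_E //.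
  by have [t_M|//] := leP t (M k); apply: IH; rewrite t_M lexx.
have [v_E|E_v] := leP v (E k); first by apply: frozen_move; rewrite t_v.
rewrite (still_between (k := k)) ?(ltW E_v) //.
have [t_E|E_t] := leP t (E k); first by apply: frozen_move; rewrite t_E lexx.
by rewrite -(still_between (k := k) (u := t)) // (ltW E_t) (le_trans t_v v_M).
Qed.

Lemma frozen_destination : exists2 k, t < L k & d k = x t.
Proof.
have [k t_L] := activated t; exists k => //; have [L_C _ _ _] := cycles_ordered k.
have t_C := lt_le_trans t_L L_C.
have last_C := last_compute_at_compute cycles_ordered moves_nonempty k.
by rewrite (at_destination t_C last_C) frozen_after // ltW.
Qed.

End FrozenRobot.

Theorem lemma7 (R : realType) (n f : nat) (byz : {set 'I_n})
  (delta : 'I_n -> R) (pos : 'I_n -> R -> R) (L C M E : 'I_n -> nat -> R) :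
  (5 * f < n)%N ->
  (#|byz| <= f)%N ->
  (forall i, 0 < delta i) ->
  corda_execution n f byz delta pos L C M E ->
  cautious n f byz pos L C.
Proof.
move=> lt_5f_n byz_le_f delta_gt0 exec; split.
  by move=> i t k i_ok _; apply: destination_between_correct => //; lia.
move=> t not_gathered; apply: contrapT => no_progress; apply: not_gathered.
have robot_frozen i : i \notin byz ->
    (forall u, t <= u -> pos i u = pos i t) /\
    exists2 k, t < L i k & dest_of n f pos L i k = pos i t.
  move=> i_ok; have [ordered activated still_before still_between moves] := exec i i_ok.
  have at_destination t' k : t < t' -> last_compute_at (C i) t' k ->
      dest_of n f pos L i k = pos i t'.
    move=> t_t' last; apply: contrapT => moving; apply: no_progress.
    by exists i, t', k; split => //; apply/eqP.
  split.
  - exact: frozen_after ordered activated still_before still_between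
      (delta_gt0 i) moves at_destination.
  - exact: frozen_destination ordered activated still_before still_between
      (delta_gt0 i) moves at_destination.
apply: (frozen_robots_gathered byz_le_f lt_5f_n) => i i_ok.
  by case: (robot_frozen i i_ok).
have [frozen [k t_L fixed]] := robot_frozen i i_ok.
by exists (L i k); [exact: ltW | rewrite -[in X in destination _ _ _ X](frozen _ (ltW t_L))].
Qed.
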